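(* Every $\omega_1$-existentially closed group is strongly bounded.
   Context: A group $G$ is $\omega_1$-existentially closed if every countable set of equations and inequations with coefficients in $G$ which has a solution in some group containing $G$ already has a solution in $G$. A group is called strongly bounded if for every action of it by isometries on a metric space, every orbit is bounded. *)

From Stdlib Require Import Reals Rtopology.
Open Scope R_scope.

Record Group := {
  gcar :> Type;
  gmul : gcar -> gcar -> gcar;
  ginv : gcar -> gcar;
  gone : gcar;
  gmul_assoc : forall x y z, gmul x (gmul y z) = gmul (gmul x y) z;
  gmul_1l : forall x, gmul gone x = x;
  gmul_1r : forall x, gmul x gone = x;
  gmul_Vl : forall x, gmul (ginv x) x = gone;
  gmul_Vr : forall x, gmul x (ginv x) = gone
}.

Arguments gmul {g}.
Arguments ginv {g}.
Arguments gone {g}.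

Definition is_hom (G H : Group) (f : G -> H) : Prop :=
  forall x y : G, f (gmul x y) = gmul (f x) (f y).

(** Words / terms in countably many unknowns x_0, x_1, ... with
    coefficients (constants) in G, i.e. elements of G * F(x_0, x_1, ...). *)
Inductive term (G : Type) : Type :=
  | tconst : G -> term G
  | tvar : nat -> term G
  | tmul : term G -> term G -> term G
  | tinv : term G -> term G.

Arguments tconst {G}.
Arguments tvar {G}.
Arguments tmul {G}.
Arguments tinv {G}.

Fixpoint eval_term {G : Type} {H : Group} (f : G -> H) (s : nat -> H)
    (t : term G) : H :=
  match t with
  | tconst g => f g
  | tvar n => s n
  | tmul t1 t2 => gmul (eval_term f s t1) (eval_term f s t2)
  | tinv t1 => ginv (eval_term f s t1)
  end.

(** A countable system of equations w = 1 (for w in [eqs n]) and inequations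
    w <> 1 (for w in [ineqs n]) with coefficients in G.  Using [option]
    allows empty or finite families as well. *)
Record system (G : Type) := {
  eqs : nat -> option (term G);
  ineqs : nat -> option (term G)
}.

Arguments eqs {G}.
Arguments ineqs {G}.

Definition solves {G : Type} {H : Group} (f : G -> H) (S : system G)
    (s : nat -> H) : Prop :=
  (forall n w, eqs S n = Some w -> eval_term f s w = gone) /\
  (forall n w, ineqs S n = Some w -> eval_term f s w <> gone).

Definition solvable_over (G : Group) (S : system G) : Prop :=
  exists (H : Group) (f : G -> H),
    is_hom G H f /\ (forall x y, f x = f y -> x = y) /\
    exists s : nat -> H, solves f S s.

Definition omega1_ec (G : Group) : Prop :=
  forall S : system G, solvable_over G S ->
    exists s : nat -> G, solves (H := G) (fun g => g) S s.

Definition isometric_action (G : Group) (X : Metric_Space)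
    (a : G -> Base X -> Base X) : Prop :=
  (forall x, a gone x = x) /\
  (forall g h x, a (gmul g h) x = a g (a h x)) /\
  (forall g x y, dist X (a g x) (a g y) = dist X x y).

Definition strongly_bounded (G : Group) : Prop :=
  forall (X : Metric_Space) (a : G -> Base X -> Base X),
    isometric_action G X a ->
    forall x : Base X, exists M : R,
      forall g h : G, dist X (a g x) (a h x) <= M.

(** Let [ℓ g = d(g x, x)] be the displacement of a point [x] under an
    isometric action of [G]; it is subadditive and invariant under inversion.
    For any sequence [(g n)] in [G], the equations [g n = [t^n a t^-n, b]] in
    the unknowns [t, a, b] are solvable in the permutation group of
    [G * Z * Z], which contains [G]; so they are solvable in [G] when [G] is
    omega_1-existentially closed, and then [ℓ (g n) <= 4 n ℓ t + 2 ℓ a + 2 ℓ b]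
    grows at most linearly.  Hence [ℓ] is bounded, for otherwise some sequence
    would have [ℓ (g n) > n^2], and bounded displacement means bounded orbits. *)

From Stdlib Require Import Reals Rtopology.
From Stdlib Require Import ZArith Lia Lra Psatz Classical ClassicalEpsilon
  FunctionalExtensionality ProofIrrelevance.

Section GroupBasics.
Variable G : Group.

Lemma ginv_one : ginv (@gone G) = gone.
Proof. rewrite <- (gmul_1l G (ginv gone)); apply gmul_Vr. Qed.

Lemma ginv_mul_eq_one (x y : G) : gmul (ginv x) y = gone -> y = x.
Proof.
  intros Hxy.
  rewrite <- (gmul_1l G y), <- (gmul_Vr G x), <- gmul_assoc, Hxy, gmul_1r.
  reflexivity.
Qed.

Fixpoint gpow (x : G) (n : nat) : G :=
  match n with
  | O => gone
  | S m => gmul x (gpow x m)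
  end.

Definition gconj (x y : G) : G := gmul x (gmul y (ginv x)).

Definition gcomm (x y : G) : G := gmul x (gmul y (gmul (ginv x) (ginv y))).

End GroupBasics.

Arguments gpow {G}.
Arguments gconj {G}.
Arguments gcomm {G}.

Record perm (X : Type) : Type := Perm {
  fwd : X -> X;
  bwd : X -> X;
  fwd_bwd : forall x, fwd (bwd x) = x;
  bwd_fwd : forall x, bwd (fwd x) = x
}.

Arguments Perm {X}.
Arguments fwd {X}.
Arguments bwd {X}.
Arguments fwd_bwd {X}.
Arguments bwd_fwd {X}.

Section PermGroup.
Variable X : Type.

Lemma perm_ext (p q : perm X) : (forall x, fwd p x = fwd q x) -> p = q.
Proof.
  destruct p as [f g fg gf], q as [f' g' fg' gf']; cbn; intros Hff'.
  assert (f = f') as <- by (apply functional_extensionality; exact Hff').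
  assert (g = g') as <-.
  { apply functional_extensionality; intros x.
    rewrite <- (fg' x) at 1; apply gf. }
  f_equal; apply proof_irrelevance.
Qed.

Lemma bwd_eq (p : perm X) x y : fwd p x = y -> bwd p y = x.
Proof. intros <-; apply bwd_fwd. Qed.

Definition perm_mul (p q : perm X) : perm X.
Proof.
  refine (Perm (fun x => fwd p (fwd q x)) (fun x => bwd q (bwd p x)) _ _);
    intros x.
  - rewrite !fwd_bwd; reflexivity.
  - rewrite !bwd_fwd; reflexivity.
Defined.

Definition perm_inv (p : perm X) : perm X :=
  Perm (bwd p) (fwd p) (bwd_fwd p) (fwd_bwd p).

Definition perm_one : perm X :=
  Perm (fun x => x) (fun x => x) (fun _ => eq_refl) (fun _ => eq_refl).

Definition PermGroup : Group.
Proof.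
  refine {| gcar := perm X; gmul := perm_mul; ginv := perm_inv;
            gone := perm_one |};
    intros; apply perm_ext; intros; cbn; auto using fwd_bwd, bwd_fwd.
Defined.

Lemma fwd_mul (p q : PermGroup) x : fwd (gmul p q) x = fwd p (fwd q x).
Proof. reflexivity. Qed.

Lemma fwd_inv (p : PermGroup) x : fwd (ginv p) x = bwd p x.
Proof. reflexivity. Qed.

End PermGroup.

Section Embedding.
Variable G : Group.
Local Open Scope Z_scope.

Definition Space : Type := G * Z * Z.

Definition fibre_mul (c : Z -> Z -> G) : PermGroup Space.
Proof.
  refine (Perm (fun '(h, j, k) => (gmul (c j k) h, j, k))
               (fun '(h, j, k) => (gmul (ginv (c j k)) h, j, k)) _ _);
    intros [[h j] k]; rewrite gmul_assoc.
  - rewrite gmul_Vr, gmul_1l; reflexivity.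
  - rewrite gmul_Vl, gmul_1l; reflexivity.
Defined.

Definition shift_up : PermGroup Space.
Proof.
  refine (Perm (fun '(h, j, k) => (h, j, k + 1)) (fun '(h, j, k) => (h, j, k - 1))
            _ _);
    intros [[h j] k]; f_equal; lia.
Defined.

Definition shift_row0 : PermGroup Space.
Proof.
  refine (Perm (fun '(h, j, k) => if k =? 0 then (h, j + 1, k) else (h, j, k))
               (fun '(h, j, k) => if k =? 0 then (h, j - 1, k) else (h, j, k))
            _ _);
    intros [[h j] k]; destruct (k =? 0) eqn:Hk; cbn; rewrite Hk; repeat f_equal; lia.
Defined.

Definition point_mul (g : G) : PermGroup Space :=
  fibre_mul (fun j k => if ((j =? 0) && (k =? 0))%bool then g else gone).

Lemma fibre_mul_ext (c c' : Z -> Z -> G) :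
  (forall j k, c j k = c' j k) -> fibre_mul c = fibre_mul c'.
Proof. intros Hcc'; apply perm_ext; intros [[h j] k]; cbn; rewrite Hcc'; reflexivity. Qed.

Lemma point_mul_is_hom : is_hom G (PermGroup Space) point_mul.
Proof.
  intros x y; apply perm_ext; intros [[h j] k]; cbn.
  destruct ((j =? 0) && (k =? 0))%bool; rewrite ?gmul_1l, ?gmul_assoc; reflexivity.
Qed.

Lemma point_mul_inj (x y : G) : point_mul x = point_mul y -> x = y.
Proof.
  intros Hxy.
  pose proof (f_equal (fun p => fwd p (gone, 0, 0)) Hxy) as H0; cbn in H0.
  rewrite !gmul_1r in H0; congruence.
Qed.

Lemma point_mul_one : point_mul gone = gone.
Proof.
  apply perm_ext; intros [[h j] k]; cbn.
  destruct ((j =? 0) && (k =? 0))%bool; rewrite gmul_1l; reflexivity.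
Qed.

Lemma fwd_shift_up_pow n h j k :
  fwd (gpow shift_up n) (h, j, k) = (h, j, k + Z.of_nat n).
Proof.
  induction n as [|n IHn]; cbn [gpow].
  - cbn; rewrite Z.add_0_r; reflexivity.
  - rewrite fwd_mul, IHn, Nat2Z.inj_succ, Z.add_succ_r; reflexivity.
Qed.

Lemma conj_shift_up_pow_fibre_mul n c :
  gconj (gpow shift_up n) (fibre_mul c) = fibre_mul (fun j k => c j (k - Z.of_nat n)).
Proof.
  apply perm_ext; intros [[h j] k]; unfold gconj.
  rewrite !fwd_mul, fwd_inv.
  rewrite (bwd_eq _ _ (h, j, k - Z.of_nat n) (h, j, k)).
  - cbn [fwd fibre_mul]; rewrite fwd_shift_up_pow, Z.sub_add; reflexivity.
  - rewrite fwd_shift_up_pow, Z.sub_add; reflexivity.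
Qed.

Lemma comm_fibre_mul_shift_row0 c :
  gcomm (fibre_mul c) shift_row0 =
  fibre_mul (fun j k => if k =? 0 then gmul (c j k) (ginv (c (j - 1) k)) else gone).
Proof.
  apply perm_ext; intros [[h j] k]; unfold gcomm; cbn.
  destruct (k =? 0) eqn:Hk; cbn; rewrite ?Hk.
  - rewrite Z.sub_add, !gmul_assoc; reflexivity.
  - rewrite gmul_assoc, gmul_Vr, !gmul_1l; reflexivity.
Qed.

(* On the row [k = -n], [fibre_mul (step_coeffs gs)] multiplies the fibres with
   [j >= 0] by [gs n] and the others by [1].  Conjugating by [shift_up ^ n]
   moves this row to [k = 0], and the commutator with [shift_row0] keeps only
   the jump of this step function, at [j = 0]. *)
Definition step_coeffs (gs : nat -> G) (j k : Z) : G :=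
  if 0 <=? j then gs (Z.to_nat (- k)) else gone.

Lemma comm_conj_step_coeffs gs n :
  gcomm (gconj (gpow shift_up n) (fibre_mul (step_coeffs gs))) shift_row0 =
  point_mul (gs n).
Proof.
  rewrite conj_shift_up_pow_fibre_mul, comm_fibre_mul_shift_row0.
  apply fibre_mul_ext; intros j k; unfold step_coeffs.
  destruct (Z.eqb_spec k 0) as [->|Hk]; cbn [andb].
  - replace (Z.to_nat (- (0 - Z.of_nat n))) with n by lia.
    destruct (Z.leb_spec 0 j), (Z.leb_spec 0 (j - 1)), (Z.eqb_spec j 0);
      try lia; cbn [andb]; rewrite ?gmul_Vr, ?ginv_one, ?gmul_1l, ?gmul_1r;
      reflexivity.
  - destruct (j =? 0); reflexivity.
Qed.

End Embedding.

Section CommutatorSystem.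
Variable G : Group.

Fixpoint tpow (n : nat) : term G :=
  match n with
  | O => tconst gone
  | S m => tmul (tvar 0) (tpow m)
  end.

Definition comm_word (n : nat) : term G :=
  let u := tmul (tpow n) (tmul (tvar 1) (tinv (tpow n))) in
  tmul u (tmul (tvar 2) (tmul (tinv u) (tinv (tvar 2)))).

Lemma eval_tpow (H : Group) (f : G -> H) s n :
  f gone = gone -> eval_term f s (tpow n) = gpow (s 0%nat) n.
Proof.
  intros Hf1; induction n as [|n IHn]; cbn; [exact Hf1 | rewrite <- IHn; reflexivity].
Qed.

Lemma eval_comm_word (H : Group) (f : G -> H) s n :
  f gone = gone ->
  eval_term f s (comm_word n) = gcomm (gconj (gpow (s 0%nat) n) (s 1%nat)) (s 2%nat).
Proof. intros Hf1; cbn; rewrite !(eval_tpow _ _ _ _ Hf1); reflexivity. Qed.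

Definition comm_system (gs : nat -> G) : system G := {|
  eqs n := Some (tmul (tinv (tconst (gs n))) (comm_word n));
  ineqs _ := None
|}.

Lemma comm_system_solvable gs : solvable_over G (comm_system gs).
Proof.
  exists (PermGroup (Space G)), (point_mul G).
  split; [apply point_mul_is_hom |].
  split; [apply point_mul_inj |].
  exists (fun i => match i with
                   | O => shift_up G
                   | 1%nat => fibre_mul G (step_coeffs G gs)
                   | _ => shift_row0 G
                   end).
  split; [| discriminate].
  intros n w [= <-]; cbn [eval_term].
  rewrite eval_comm_word, comm_conj_step_coeffs by apply point_mul_one.
  apply gmul_Vl.
Qed.

Lemma solves_comm_system gs s :
  solves (fun g => g) (comm_system gs) s ->
  forall n, gs n = gcomm (gconj (gpow (s 0%nat) n) (s 1%nat)) (s 2%nat).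
Proof.
  intros [Heqs _] n.
  specialize (Heqs n _ eq_refl); cbn [eval_term] in Heqs.
  rewrite eval_comm_word in Heqs by reflexivity.
  symmetry; exact (ginv_mul_eq_one _ _ _ Heqs).
Qed.

Lemma omega1_ec_comm_conj_pow (gs : nat -> G) :
  omega1_ec G -> exists t a b, forall n, gs n = gcomm (gconj (gpow t n) a) b.
Proof.
  intros Hec.
  destruct (Hec _ (comm_system_solvable gs)) as [s Hs].
  exists (s 0%nat), (s 1%nat), (s 2%nat); exact (solves_comm_system gs s Hs).
Qed.

End CommutatorSystem.

Record length_function (G : Group) (len : G -> R) : Prop := {
  len_one : len gone = 0;
  len_mul : forall x y, len (gmul x y) <= len x + len y;
  len_inv : forall x, len (ginv x) = len x
}.

Section LengthFunction.
Variable G : Group.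
Variable len : G -> R.
Hypothesis len_fun : length_function G len.

Lemma len_gpow x n : len (gpow x n) <= INR n * len x.
Proof.
  induction n as [|n IHn]; cbn [gpow].
  - rewrite (len_one _ _ len_fun); cbn [INR]; lra.
  - rewrite S_INR; pose proof (len_mul _ _ len_fun x (gpow x n)); lra.
Qed.

Lemma len_gconj x y : len (gconj x y) <= 2 * len x + len y.
Proof.
  destruct len_fun as [_ Hmul Hinv]; unfold gconj.
  pose proof (Hmul x (gmul y (ginv x))); pose proof (Hmul y (ginv x)).
  rewrite Hinv in *; lra.
Qed.

Lemma len_gcomm x y : len (gcomm x y) <= 2 * len x + 2 * len y.
Proof.
  destruct len_fun as [_ Hmul Hinv]; unfold gcomm.
  pose proof (Hmul x (gmul y (gmul (ginv x) (ginv y)))).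
  pose proof (Hmul y (gmul (ginv x) (ginv y))); pose proof (Hmul (ginv x) (ginv y)).
  rewrite !Hinv in *; lra.
Qed.

Lemma len_comm_conj_pow t a b n :
  len (gcomm (gconj (gpow t n) a) b) <= 4 * len t * INR n + (2 * len a + 2 * len b).
Proof.
  pose proof (len_gcomm (gconj (gpow t n) a) b).
  pose proof (len_gconj (gpow t n) a).
  pose proof (len_gpow t n); lra.
Qed.

End LengthFunction.

Lemma quadratic_not_linearly_bounded (A B : R) :
  exists n : nat, A * INR n + B < INR n * INR n.
Proof.
  destruct (INR_archimed 1 (Rabs A + Rabs B + 1)) as [n Hn]; [lra |].
  exists n; rewrite Rmult_1_r in Hn.
  pose proof (Rle_abs A); pose proof (Rle_abs B).
  pose proof (Rabs_pos A); pose proof (Rabs_pos B).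
  nra.
Qed.

Lemma bounded_of_linear_growth (T : Type) (f : T -> R) :
  (forall u : nat -> T, exists A B, forall n, f (u n) <= A * INR n + B) ->
  exists M, forall x, f x <= M.
Proof.
  intros Hlin; apply NNPP; intros Hunb.
  assert (Hbig : forall n : nat, exists x, INR n * INR n < f x).
  { intros n; apply NNPP; intros Hsmall; apply Hunb.
    exists (INR n * INR n); intros x; apply Rnot_lt_le.
    intros Hx; apply Hsmall; exists x; exact Hx. }
  destruct (choice _ Hbig) as [u Hu].
  destruct (Hlin u) as (A & B & HAB).
  destruct (quadratic_not_linearly_bounded A B) as [n Hn].
  specialize (Hu n); specialize (HAB n); lra.
Qed.

Section Displacement.
Variable G : Group.
Variable X : Metric_Space.
Variable a : G -> Base X -> Base X.
Hypothesis isometric : isometric_action G X a.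
Variable x : Base X.

Definition displacement (g : G) : R := dist X (a g x) x.

Lemma displacement_length_function : length_function G displacement.
Proof.
  destruct isometric as (act1 & actM & act_dist); unfold displacement.
  split.
  - rewrite act1; apply dist_refl; reflexivity.
  - intros g h; rewrite actM, <- (act_dist g (a h x) x), Rplus_comm.
    apply dist_tri.
  - intros g; rewrite <- (act_dist g), <- actM, gmul_Vr, act1; apply dist_sym.
Qed.

Lemma orbit_bounded_of_displacement_bounded M :
  (forall g, displacement g <= M) -> forall g h, dist X (a g x) (a h x) <= 2 * M.
Proof.
  unfold displacement; intros HM g h.
  pose proof (dist_tri X (a g x) (a h x) x); pose proof (dist_sym X x (a h x)).
  pose proof (HM g); pose proof (HM h); lra.
Qed.

End Displacement.

Theorem mainTheorem2 (G : Group) : omega1_ec G -> strongly_bounded G.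
Proof.
  intros Hec X a Ha x.
  destruct (bounded_of_linear_growth _ (displacement G X a x)) as [M HM].
  - intros gs.
    destruct (omega1_ec_comm_conj_pow G gs Hec) as (t & u & v & Hgs).
    eexists; eexists; intros n; rewrite Hgs.
    apply len_comm_conj_pow, displacement_length_function, Ha.
  - exists (2 * M); apply orbit_bounded_of_displacement_bounded, HM.
Qed.
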